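(* Let $\mathbb{M}$ be a multiplicative subgroup of $\mathbb{C}^*$, $\mathcal{K}\in\{\mathbb{M}^r,(\mathbb{M}\cup\{0\})^r\}$, and $\mathcal{X}\subseteq\mathbb{M}^n$ a multiplicative subgroup. Then: (i) There exist $\kappa\in\mathcal{K}$ and a nondegenerate solution of $f_\kappa(x)=0$ in $\mathcal{X}$ if and only if $\operatorname{rk}(N\operatorname{diag}(w)B^\top)=s$ for some $w\in\ker(N)\cap\mathcal{K}$. (ii) There exist $(\kappa,c)\in\mathcal{K}\times\mathbb{C}^d$ and a nondegenerate solution of $F_{\kappa,c}(x)=0$ in $\mathcal{X}$ if and only if the $n\times n$ matrix $\begin{pmatrix}N\operatorname{diag}(w)B^\top\operatorname{diag}(h)\\ W\end{pmatrix}$ has rank $n$ for some $w\in\ker(N)\cap\mathcal{K}$ and some $h\in\mathcal{X}$. For a fixed $c\in\mathbb{C}^d$, there exist $\kappa\in\mathcal{K}$ and a nondegenerate solution of $F_{\kappa,c}(x)=0$ in $\mathcal{X}$ if and only if this matrix has rank $n$ for some $w\in\ker(N)\cap\mathcal{K}$ and some $h\in\mathcal{X}$ with $c=Wh^{-1}$.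
   Context: Let $N\in\mathbb{C}^{s\times r}$ have rank $s$, $W\in\mathbb{C}^{d\times n}$ have rank $d=n-s$, $B\in\mathbb{Z}^{n\times r}$. $\circ$ is the Hadamard product, $h^{-1}$ the entrywise inverse, $x^B\in\mathbb{C}^r$ has $j$-th entry $\prod_i x_i^{b_{ij}}$. $f_\kappa(x)=N(\kappa\circ x^B)$ and $F_{\kappa,c}(x)=\begin{pmatrix}N(\kappa\circ x^B)\\ Wx-c\end{pmatrix}$. A solution $x^*$ of a system $h(x)=0$ of $t$ Laurent polynomials is nondegenerate if the Jacobian $J_h(x^* )$ with respect to $x$ has rank $t$. *)

From HB Require Import structures.
From mathcomp Require Import all_boot all_order all_algebra.
From mathcomp Require Import complex.
From mathcomp Require Import reals.
Set Implicit Arguments. Unset Strict Implicit. Unset Printing Implicit Defensive.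
Import Order.TTheory GRing.Theory Num.Theory.
Local Open Scope ring_scope.
Local Open Scope complex_scope.

(* Laurent polynomials in n variables over a ring, as finite formal sums of
   terms  c * x^e  with c a coefficient and e an integer exponent vector. *)
Definition laurent (F : Type) (n : nat) := seq (F * {ffun 'I_n -> int}).

Section Laurent.
Variable (F : fieldType) (n : nat).

Definition monom_eval (e : {ffun 'I_n -> int}) (x : 'cV[F]_n) : F :=
  \prod_(i < n) (x i 0) ^ (e i).

Definition leval (p : laurent F n) (x : 'cV[F]_n) : F :=
  \sum_(t <- p) t.1 * monom_eval t.2 x.

Definition lderiv (i : 'I_n) (p : laurent F n) : laurent F n :=
  map (fun t : F * {ffun 'I_n -> int} =>
    (t.1 * (t.2 i)%:~R, [ffun k => t.2 k - (k == i)%:Z])) p.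

Definition jacobian t (h : 'I_t -> laurent F n) (x : 'cV[F]_n) : 'M[F]_(t, n) :=
  \matrix_(k < t, i < n) leval (lderiv i (h k)) x.

Definition nondeg_sol t (h : 'I_t -> laurent F n) (x : 'cV[F]_n) : Prop :=
  (forall i, x i 0 != 0) /\ (forall k, leval (h k) x = 0) /\
  \rank (jacobian h x) = t.

Definition colexp r (B : 'M[int]_(n, r)) (j : 'I_r) : {ffun 'I_n -> int} :=
  [ffun i => B i j].

(* f_kappa(x) = N (kappa o x^B): k-th entry is sum_j N_kj kappa_j x^{B_j} *)
Definition f_sys s r (N : 'M[F]_(s, r)) (B : 'M[int]_(n, r)) (kappa : 'cV[F]_r)
  : 'I_s -> laurent F n :=
  fun k => [seq (N k j * kappa j 0, colexp B j) | j <- enum 'I_r].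

Definition unitexp (i : 'I_n) : {ffun 'I_n -> int} := [ffun k => (k == i)%:Z].
Definition lin_sys d (W : 'M[F]_(d, n)) (c : 'cV[F]_d) : 'I_d -> laurent F n :=
  fun k => (- c k 0, [ffun => 0%Z]) :: [seq (W k i, unitexp i) | i <- enum 'I_n].

(* F_{kappa,c}(x) = (N (kappa o x^B) ; W x - c) *)
Definition F_sys s r d (N : 'M[F]_(s, r)) (B : 'M[int]_(n, r)) (W : 'M[F]_(d, n))
  (kappa : 'cV[F]_r) (c : 'cV[F]_d) : 'I_(s + d) -> laurent F n :=
  fun k => match split k with
           | inl k1 => f_sys N B kappa k1
           | inr k2 => lin_sys W c k2
           end.

Definition mult_subgroup (M : F -> Prop) : Prop :=
  [/\ M 1, ~ M 0, (forall a b, M a -> M b -> M (a * b)) &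
      (forall a, M a -> M a^-1)].

Definition mult_subgroup_vec (M : F -> Prop) (X : 'cV[F]_n -> Prop) : Prop :=
  [/\ X (const_mx 1),
      (forall x y, X x -> X y -> X (map2_mx *%R x y)),
      (forall x, X x -> X (map_mx GRing.inv x)) &
      (forall x, X x -> forall i, M (x i 0))].

End Laurent.

(* K = M^r (withzero = false) or (M u {0})^r (withzero = true) *)
Definition Kset (F : fieldType) (M : F -> Prop) (withzero : bool) r
  (kappa : 'cV[F]_r) : Prop :=
  forall j, M (kappa j 0) \/ (withzero /\ kappa j 0 = 0).

From HB Require Import structures.
From mathcomp Require Import all_boot all_order all_algebra.
From mathcomp Require Import complex.
From mathcomp Require Import reals.
Import Order.TTheory GRing.Theory Num.Theory.
Local Open Scope ring_scope.
Set Implicit Arguments. Unset Strict Implicit. Unset Printing Implicit Defensive.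

(* Everything is reduced to the vector  w = kappa o x^B  of
   monomial values.  For x in the torus (F^* )^n:
   - f_kappa(x) = N w, and the Jacobian of f_kappa at x is
     N diag(w) B^T diag(x^-1), since  d/dx_i x^{B_j} = B_ij x^{B_j} / x_i;
   - the Jacobian of  W x - c  is W, and that of F_{kappa,c} stacks the two.
   As diag(x^-1) is invertible, x is a nondegenerate solution of f_kappa iff
   N w = 0 and rk(N diag(w) B^T) = s, and of F_{kappa,c} iff moreover
   c = W x and the stacked matrix (with h = x^-1) has full rank s + d.
   The theorem follows by choosing witnesses: forward, w := kappa o x^B and
   h := x^-1; backward, x := 1 and kappa := w for part (i), and x := h^-1 and
   kappa := w o h^B for part (ii) (so that kappa o x^B = w).  The
   subgroup hypotheses on M and X guarantee that these witnesses stay in K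
   and X.  The general statements are proved over an arbitrary field. *)

Section Monomials.
Variables (F : fieldType) (n : nat).
Implicit Types (x : 'cV[F]_n) (e : {ffun 'I_n -> int}).

Definition torus x : Prop := forall i, x i 0 != 0.

Definition inv_vec x : 'cV[F]_n := map_mx GRing.inv x.

Lemma inv_vecK : involutive inv_vec.
Proof. by move=> x; apply/matrixP => i j; rewrite !mxE invrK. Qed.

Lemma torus_inv x : torus x -> torus (inv_vec x).
Proof. by move=> hx i; rewrite mxE invr_eq0. Qed.

Lemma monom_evalV e x : monom_eval e (inv_vec x) = (monom_eval e x)^-1.
Proof.
by rewrite /monom_eval -prodfV; apply: eq_bigr => i _; rewrite mxE expfV.
Qed.

Lemma monom_eval1 e : monom_eval e (const_mx 1 : 'cV[F]_n) = 1.
Proof. by rewrite /monom_eval big1 // => i _; rewrite mxE exp1rz. Qed.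

Lemma monom_eval_const x : monom_eval [ffun => 0%Z] x = 1.
Proof. by rewrite /monom_eval big1 // => k _; rewrite ffunE expr0z. Qed.

Lemma monom_eval_unitexp x i : monom_eval (unitexp i) x = x i 0.
Proof.
rewrite /monom_eval (bigD1 i) //= big1 ?mulr1; first by rewrite ffunE eqxx expr1z.
by move=> k /negbTE hk; rewrite ffunE hk expr0z.
Qed.

Lemma monom_eval_lower e x i : torus x ->
  monom_eval [ffun k => e k - (k == i)%:Z] x = monom_eval e x * (x i 0)^-1.
Proof.
move=> hx; rewrite /monom_eval.
rewrite (eq_bigr (fun k => x k 0 ^ e k * (if k == i then (x i 0)^-1 else 1))).
  by rewrite big_split /= -big_mkcond /= big_pred1_eq.
move=> k _; rewrite ffunE expfzDr //.
by case: eqP => [->|_]; rewrite ?exprN1 ?expr0z.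
Qed.

Lemma monom_eval_subgroup (M : F -> Prop) e x :
  mult_subgroup M -> (forall i, M (x i 0)) -> M (monom_eval e x).
Proof.
case=> M1 _ MM MV hx; apply: (big_ind M) => // i _.
have Mexp k : M (x i 0 ^+ k) by elim: k => [|k IH]; rewrite ?expr0 // exprS; apply: MM.
by case: (e i) => k; [apply: Mexp | apply/MV/Mexp].
Qed.

End Monomials.

Lemma mxrank_mul_diag (F : fieldType) m n (A : 'M[F]_(m, n)) (h : 'cV[F]_n) :
  torus h -> \rank (A *m diag_mx h^T) = \rank A.
Proof.
move=> hh; apply/mxrankMfree/row_freeP.
exists (diag_mx (inv_vec h)^T); rewrite mulmx_diag -diag_const_mx.
by congr diag_mx; apply/matrixP => i j; rewrite !mxE mulfV.
Qed.

Section Jacobians.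
Variables (F : fieldType) (n s r d : nat).
Variables (N : 'M[F]_(s, r)) (B : 'M[int]_(n, r)) (W : 'M[F]_(d, n)).

Definition monom_vec (kappa : 'cV[F]_r) (x : 'cV[F]_n) : 'cV[F]_r :=
  \col_j (kappa j 0 * monom_eval (colexp B j) x).

Definition exp_mx : 'M[F]_(r, n) := (map_mx (fun z : int => z%:~R : F) B)^T.

Lemma monom_vec1 kappa : monom_vec kappa (const_mx 1) = kappa.
Proof. by apply/matrixP => j k; rewrite ord1 mxE monom_eval1 mulr1. Qed.

Lemma monom_vec_inv kappa h : (forall j, monom_eval (colexp B j) h != 0) ->
  monom_vec (monom_vec kappa h) (inv_vec h) = kappa.
Proof.
move=> hh; apply/matrixP => j k.
by rewrite ord1 !mxE monom_evalV -mulrA mulfV ?mulr1.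
Qed.

Lemma leval_f_sys kappa x k : leval (f_sys N B kappa k) x = (N *m monom_vec kappa x) k 0.
Proof.
rewrite /leval /f_sys big_map big_enum /= mxE; apply: eq_bigr => j _.
by rewrite mxE mulrA.
Qed.

Lemma f_sys_zeroP kappa x :
  (forall k, leval (f_sys N B kappa k) x = 0) <-> N *m monom_vec kappa x = 0.
Proof.
split=> [H|H k]; last by rewrite leval_f_sys H mxE.
by apply/matrixP => k j; rewrite ord1 -leval_f_sys H mxE.
Qed.

Lemma jacobian_f_sys kappa x : torus x ->
  jacobian (f_sys N B kappa) x =
  N *m diag_mx (monom_vec kappa x)^T *m exp_mx *m diag_mx (inv_vec x)^T.
Proof.
move=> hx; apply/matrixP => k i.
rewrite mul_mx_diag !mxE /leval /lderiv /f_sys -map_comp big_map big_enum /=.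
rewrite big_distrl /=; apply: eq_bigr => j _.
rewrite mul_mx_diag !mxE monom_eval_lower // /colexp ffunE.
by rewrite !mulrA (mulrAC (N k j * kappa j 0)).
Qed.

Lemma leval_lin_sys c x k : leval (lin_sys W c k) x = (W *m x - c) k 0.
Proof.
rewrite /leval /lin_sys big_cons big_map big_enum /= monom_eval_const mulr1.
rewrite !mxE addrC; congr (_ + _); apply: eq_bigr => i _.
by rewrite monom_eval_unitexp.
Qed.

Lemma lin_sys_zeroP c x :
  (forall k, leval (lin_sys W c k) x = 0) <-> c = W *m x.
Proof.
split=> [H|-> k]; last by rewrite leval_lin_sys subrr mxE.
apply/esym/eqP; rewrite -subr_eq0; apply/eqP/matrixP => k j.
by rewrite ord1 -leval_lin_sys H mxE.
Qed.

Lemma jacobian_lin_sys c x : jacobian (lin_sys W c) x = W.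
Proof.
apply/matrixP => k i.
rewrite !mxE /leval /lderiv /lin_sys /= big_cons /= ffunE mulr0 mul0r add0r.
rewrite -map_comp big_map big_enum /= (bigD1 i) //= big1 ?addr0.
  rewrite ffunE eqxx mulr1 /monom_eval big1 ?mulr1 // => l _.
  by rewrite !ffunE subrr expr0z.
by move=> l /negbTE hl; rewrite ffunE eq_sym hl mulr0 mul0r.
Qed.

Lemma F_sys_zeroP kappa c x :
  (forall k, leval (F_sys N B W kappa c k) x = 0) <->
  N *m monom_vec kappa x = 0 /\ c = W *m x.
Proof.
rewrite -f_sys_zeroP -lin_sys_zeroP /F_sys.
split=> [H | [Hf Hl] k]; last by case: (split k).
split=> k.
- by have := H (lshift d k); rewrite (unsplitK (inl k : 'I_s + 'I_d)).
- by have := H (rshift s k); rewrite (unsplitK (inr k : 'I_s + 'I_d)).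
Qed.

Lemma jacobian_F_sys kappa c x :
  jacobian (F_sys N B W kappa c) x =
  col_mx (jacobian (f_sys N B kappa) x) (jacobian (lin_sys W c) x).
Proof.
by apply/matrixP => k i; rewrite !mxE /F_sys; case: (split k) => k'; rewrite mxE.
Qed.

Lemma nondeg_f_sysP kappa x : torus x ->
  nondeg_sol (f_sys N B kappa) x <->
  N *m monom_vec kappa x = 0 /\
  \rank (N *m diag_mx (monom_vec kappa x)^T *m exp_mx) = s.
Proof.
move=> hx; rewrite /nondeg_sol -f_sys_zeroP jacobian_f_sys //.
rewrite mxrank_mul_diag; last exact: torus_inv.
by split=> [[_ []] | []].
Qed.

Lemma nondeg_F_sysP kappa c x : torus x ->
  nondeg_sol (F_sys N B W kappa c) x <->
  [/\ N *m monom_vec kappa x = 0, c = W *m x &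
    \rank (col_mx (N *m diag_mx (monom_vec kappa x)^T *m exp_mx
                     *m diag_mx (inv_vec x)^T) W) = (s + d)%N].
Proof.
move=> hx; rewrite /nondeg_sol F_sys_zeroP jacobian_F_sys.
rewrite jacobian_f_sys // jacobian_lin_sys.
by split=> [[_ [[? ?] ?]] | [? ? ?]].
Qed.

End Jacobians.

Section Subgroups.
Variables (F : fieldType) (n r : nat) (B : 'M[int]_(n, r)).
Variables (M : F -> Prop) (withzero : bool) (X : 'cV[F]_n -> Prop).
Hypothesis subM : mult_subgroup M.
Hypothesis subX : mult_subgroup_vec M X.

Lemma X_monom x j : X x -> M (monom_eval (colexp B j) x).
Proof. by case: subX => _ _ _ XM hx; apply: monom_eval_subgroup => // i; apply: XM. Qed.

Lemma X_torus x : X x -> torus x.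
Proof.
case: subM => _ M0 _ _; case: subX => _ _ _ XM hx i.
by apply/eqP => x0; apply: M0; rewrite -x0; apply: XM.
Qed.

Lemma X_inv x : X x -> X (inv_vec x).
Proof. by case: subX => _ _ XV _; apply: XV. Qed.

Lemma X_monom_neq0 x j : X x -> monom_eval (colexp B j) x != 0.
Proof.
case: subM => _ M0 _ _ hx; apply/eqP => m0; apply: M0.
by rewrite -m0; apply: X_monom.
Qed.

Lemma Kset_monom_vec kappa x :
  Kset M withzero kappa -> X x -> Kset M withzero (monom_vec B kappa x).
Proof.
move=> hk hx j; rewrite mxE; case: subM => _ _ MM _.
case: (hk j) => [Mk | [wz k0]]; first by left; apply/MM/X_monom.
by right; rewrite k0 mul0r.
Qed.

End Subgroups.

Section Characterizations.
Variables (F : fieldType) (n s r d : nat).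
Variables (N : 'M[F]_(s, r)) (B : 'M[int]_(n, r)) (W : 'M[F]_(d, n)).
Variables (M : F -> Prop) (withzero : bool) (X : 'cV[F]_n -> Prop).
Hypothesis subM : mult_subgroup M.
Hypothesis subX : mult_subgroup_vec M X.
Let K := Kset M withzero (r := r).

(* part (i): the witnesses are w = kappa o x^B, resp. (kappa, x) = (w, 1) *)
Lemma nondeg_f_sys_exists :
  (exists kappa, K kappa /\ exists x, X x /\ nondeg_sol (f_sys N B kappa) x) <->
  (exists w, N *m w = 0 /\ K w /\ \rank (N *m diag_mx w^T *m exp_mx F B) = s).
Proof.
have X1 : X (const_mx 1) by case: subX.
split.
  move=> [kappa [hk [x [hx]]]]; move/(nondeg_f_sysP _ _ _ (X_torus subM subX hx)).
  case=> hw hr; exists (monom_vec B kappa x); split=> //.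
  by split=> //; apply: (Kset_monom_vec B subM subX).
move=> [w [hw [hk hr]]]; exists w; split=> //; exists (const_mx 1); split=> //.
by apply/nondeg_f_sysP; rewrite ?monom_vec1 //; apply: (X_torus subM subX).
Qed.

(* part (ii), c fixed: witnesses h = x^-1, resp. (kappa, x) = (w o h^B, h^-1) *)
Lemma nondeg_F_sys_exists_at (c : 'cV[F]_d) :
  (exists kappa, K kappa /\ exists x, X x /\ nondeg_sol (F_sys N B W kappa c) x) <->
  (exists w h, N *m w = 0 /\ K w /\ X h /\ c = W *m inv_vec h /\
     \rank (col_mx (N *m diag_mx w^T *m exp_mx F B *m diag_mx h^T) W) = (s + d)%N).
Proof.
split.
  move=> [kappa [hk [x [hx]]]]; move/(nondeg_F_sysP _ _ _ _ _ (X_torus subM subX hx)).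
  case=> hw hc hr; exists (monom_vec B kappa x), (inv_vec x).
  rewrite inv_vecK; do !split=> //; first exact: (Kset_monom_vec B subM subX).
  exact: (X_inv subX).
move=> [w [h [hw [hk [hh [hc hr]]]]]].
have hx := X_inv subX hh.
have ew : monom_vec B (monom_vec B w h) (inv_vec h) = w.
  by apply: monom_vec_inv => j; apply: (X_monom_neq0 B subM subX).
exists (monom_vec B w h); split; first exact: (Kset_monom_vec B subM subX).
exists (inv_vec h); split=> //.
by apply/nondeg_F_sysP; rewrite ?ew ?inv_vecK //; apply: (X_torus subM subX).
Qed.

(* part (ii), c free: take c = W h^-1 *)
Lemma nondeg_F_sys_exists :
  (exists kappa c, K kappa /\ exists x, X x /\ nondeg_sol (F_sys N B W kappa c) x) <->
  (exists w h, N *m w = 0 /\ K w /\ X h /\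
     \rank (col_mx (N *m diag_mx w^T *m exp_mx F B *m diag_mx h^T) W) = (s + d)%N).
Proof.
split.
  move=> [kappa [c sol]].
  have [|w [h [hw [hk [hh [_ hr]]]]]] := proj1 (nondeg_F_sys_exists_at c).
    by exists kappa.
  by exists w, h.
move=> [w [h [hw [hk [hh hr]]]]].
have [|kappa sol] := proj2 (nondeg_F_sys_exists_at (W *m inv_vec h)).
  by exists w, h.
by exists kappa, (W *m inv_vec h).
Qed.

End Characterizations.

Local Open Scope complex_scope.

Theorem mainTheorem12 (R : realType) (s r n d : nat)
  (N : 'M[R[i]]_(s, r)) (W : 'M[R[i]]_(d, n)) (B : 'M[int]_(n, r))
  (M : R[i] -> Prop) (withzero : bool) (X : 'cV[R[i]]_n -> Prop) :
  \rank N = s -> (s + d)%N = n -> \rank W = d ->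
  mult_subgroup M -> mult_subgroup_vec M X ->
  let K := Kset M withzero (r := r) in
  let Bt := (map_mx (fun z : int => z%:~R : R[i]) B)^T in
  ((exists kappa, K kappa /\ exists x, X x /\ nondeg_sol (f_sys N B kappa) x)
   <->
   (exists w, N *m w = 0 /\ K w /\ \rank (N *m diag_mx w^T *m Bt) = s))
  /\
  ((exists kappa c, K kappa /\ exists x, X x /\ nondeg_sol (F_sys N B W kappa c) x)
   <->
   (exists w h, N *m w = 0 /\ K w /\ X h /\
      \rank (col_mx (N *m diag_mx w^T *m Bt *m diag_mx h^T) W) = n))
  /\
  (forall c : 'cV[R[i]]_d,
   (exists kappa, K kappa /\ exists x, X x /\ nondeg_sol (F_sys N B W kappa c) x)
   <->
   (exists w h, N *m w = 0 /\ K w /\ X h /\ c = W *m map_mx GRing.inv h /\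
      \rank (col_mx (N *m diag_mx w^T *m Bt *m diag_mx h^T) W) = n)).
Proof.
move=> _ sdn _ subM subX K Bt; subst n.
split; first exact: (nondeg_f_sys_exists N B withzero subM subX).
split; first exact: (nondeg_F_sys_exists N B W withzero subM subX).
by move=> c; exact: (nondeg_F_sys_exists_at N B W withzero subM subX c).
Qed.
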